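(* Let $q>0$ and $r\ge 0$ be real numbers. For every integer $n\ge 0$, $$\sum_{j=0}^n (-1)^n\, w(n,j)\,B_j^q(r)=\frac{n!}{n+1},$$ where $w(n,j)=w_{q,r}(n,j)$ and $B_j^q(r)$ are as defined in the context.
   Context: The Bernoulli polynomials with a $q$ parameter $B_n^q(r)$ are defined by the formal power series identity in $t$ $$\sum_{n=0}^{\infty}B_n^q(r)\frac{t^n}{n!}=\frac{q\,e^{rt}}{1-e^{qt}}\sum_{k=1}^{\infty}\left(\frac{1-e^{qt}}{q}\right)^k\frac{1}{k}.$$ Let $(x)_k=x(x-1)\cdots(x-k+1)$ denote the falling factorial ($(x)_0=1$). The $r$-Whitney numbers of the first kind $w(n,k)=w_{q,r}(n,k)$, $0\le k\le n$, are defined by the polynomial identity in $x$: $q^n(x)_n=\sum_{k=0}^n w(n,k)\,(qx+r)^k$. *)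

From mathcomp Require Import all_boot all_order all_algebra.
From mathcomp Require Import reals.
Set Implicit Arguments. Unset Strict Implicit. Unset Printing Implicit Defensive.
Import Order.TTheory GRing.Theory Num.Theory.
Local Open Scope ring_scope.

Section FPS.
Variable R : realType.

Definition fps := nat -> R.

Definition fps_const (c : R) : fps := fun n => if n is 0 then c else 0.
Definition fps_add (f g : fps) : fps := fun n => f n + g n.
Definition fps_opp (f : fps) : fps := fun n => - f n.
Definition fps_scale (c : R) (f : fps) : fps := fun n => c * f n.
Definition fps_mul (f g : fps) : fps :=
  fun n => \sum_(i < n.+1) f i * g (n - i)%N.
Fixpoint fps_pow (f : fps) (k : nat) : fps :=
  if k is k'.+1 then fps_mul f (fps_pow f k') else fps_const 1.

Definition fps_exp (a : R) : fps := fun n => a ^+ n / (n`!)%:R.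

(* The formal sum  sum_{k>=0} c k * y^k , meaningful (a finite sum in each
   coefficient) when y has zero constant term: only k <= n contribute to the
   coefficient of t^n. *)
Definition fps_psum (c : nat -> R) (y : fps) : fps :=
  fun n => \sum_(k < n.+1) c k * fps_pow y k n.

(* Inverse of a series g with g 0 <> 0:
   1/g = g0^{-1} * sum_{k>=0} (1 - g/g0)^k. *)
Definition fps_inv (g : fps) : fps :=
  fps_scale (g 0%N)^-1
    (fps_psum (fun _ => 1) (fps_add (fps_const 1) (fps_opp (fps_scale (g 0%N)^-1 g)))).

Definition fps_shift (f : fps) : fps := fun n => f n.+1.

(* Quotient f / g of series with f 0 = 0 and g of valuation exactly 1
   (g 0 = 0, g 1 <> 0):  f/g = (f/t) * (g/t)^{-1}. *)
Definition fps_div (f g : fps) : fps := fps_mul (fps_shift f) (fps_inv (fps_shift g)).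

End FPS.

(* Bernoulli polynomials with parameter q:
   sum_n B_n^q(r) t^n/n! = q e^{rt}/(1 - e^{qt}) * sum_{k>=1} ((1-e^{qt})/q)^k / k *)
Definition qBernoulli_gf (R : realType) (q r : R) : fps R :=
  let E := fps_add (fps_const 1) (fps_opp (fps_exp q)) in
  let y := fps_scale q^-1 E in
  let S := fps_psum (fun k => if k is 0 then 0 else (k%:R)^-1) y in
  fps_div (fps_scale q (fps_mul (fps_exp r) S)) E.

Definition qBernoulli (R : realType) (q r : R) (n : nat) : R :=
  (n`!)%:R * qBernoulli_gf q r n.

(* r-Whitney numbers of the first kind: the coefficients w(n,k) in
   q^n (x)_n = sum_k w(n,k) (q x + r)^k.  Writing y = q x + r, i.e.
   x = (y - r)/q, w(n,k) is the coefficient of y^k in q^n ((y-r)/q)_n. *)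
Definition falling_poly (R : realType) (n : nat) : {poly R} :=
  \prod_(i < n) ('X - (i%:R)%:P).

Definition rWhitney1 (R : realType) (q r : R) (n k : nat) : R :=
  ((q ^+ n *: falling_poly R n) \Po (q^-1 *: ('X - r%:P)))`_k.

From mathcomp Require Import all_boot all_order all_algebra.
From mathcomp Require Import reals ring zify.
Set Implicit Arguments. Unset Strict Implicit. Unset Printing Implicit Defensive.
Import Order.TTheory GRing.Theory Num.Theory.
Local Open Scope ring_scope.

(* Writing y = (1 - e^{qt})/q, the generating function of the B_j^q(r) is
   e^{rt} * sum_m y^m/(m+1), and y^m e^{rt} = q^-m sum_i (-1)^i C(m,i) e^{(r+iq)t}.
   The functional A |-> sum_j P_j j! [t^j] A sends e^{at} to P(a), so for any P
   of degree <= n, sum_j P_j B_j^q(r) = sum_{m<=n} 1/(m+1) sum_{i<=m}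
   q^-m (-1)^i C(m,i) P(r + iq).  For P = q^n ((X - r)/q)_n the Whitney
   polynomial, P(r + iq) = q^n (i)_n vanishes for i < n, so only m = i = n
   survives and gives (-1)^n n!/(n+1). *)

Section Truncation.
Variable R : realType.
Implicit Types (f g : fps R) (A B C D : {poly R}).

Definition trunc N f : {poly R} := \poly_(i < N.+1) f i.

Definition eqm N A B := take_poly N.+1 A = take_poly N.+1 B.

Lemma eqmP N A B : eqm N A B <-> forall k, (k <= N)%N -> A`_k = B`_k.
Proof.
split=> [AB k kN | AB].
  by move: AB => /(congr1 (fun p : {poly R} => p`_k)); rewrite /= !coef_take_poly ltnS kN.
by apply/polyP => k; rewrite !coef_take_poly ltnS; case: leqP => // /AB.
Qed.

Lemma eqm_coef N A B k : eqm N A B -> (k <= N)%N -> A`_k = B`_k.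
Proof. by move=> /eqmP; apply. Qed.

Lemma coef_trunc N f k : (k <= N)%N -> (trunc N f)`_k = f k.
Proof. by move=> kN; rewrite coef_poly ltnS kN. Qed.

Lemma eqm_trans N A B C : eqm N A B -> eqm N B C -> eqm N A C.
Proof. exact: etrans. Qed.
Lemma eqm_le N M A B : (M <= N)%N -> eqm N A B -> eqm M A B.
Proof. by move=> MN /eqmP AB; apply/eqmP => k kM; apply: AB; apply: leq_trans MN. Qed.
Lemma eqmM N A B C D : eqm N A B -> eqm N C D -> eqm N (A * C) (B * D).
Proof.
move=> /eqmP AB /eqmP CD; apply/eqmP => k kN; rewrite !coefM; apply: eq_bigr => i _.
have ilt := ltn_ord i; rewrite AB ?CD //=; lia.
Qed.
Lemma eqmX N A B m : eqm N A B -> eqm N (A ^+ m) (B ^+ m).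
Proof. by move=> h; elim: m => [|m ih]; rewrite ?expr0 // !exprS; apply: eqmM. Qed.
Lemma eqm_sum N (I : Type) (s : seq I) (F G : I -> {poly R}) :
  (forall i, eqm N (F i) (G i)) -> eqm N (\sum_(i <- s) F i) (\sum_(i <- s) G i).
Proof. by move=> FG; rewrite /eqm !take_poly_sum; apply: eq_bigr => i _; apply: FG. Qed.

Lemma trunc_add N f g : trunc N (fps_add f g) = trunc N f + trunc N g.
Proof. by apply/polyP => k; rewrite coefD !coef_poly; case: ifP; rewrite ?addr0. Qed.
Lemma trunc_opp N f : trunc N (fps_opp f) = - trunc N f.
Proof. by apply/polyP => k; rewrite coefN !coef_poly; case: ifP; rewrite ?oppr0. Qed.
Lemma trunc_scale N c f : trunc N (fps_scale c f) = c%:P * trunc N f.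
Proof.
by apply/polyP => k; rewrite mul_polyC coefZ !coef_poly; case: ifP; rewrite ?mulr0.
Qed.
Lemma trunc_const N c : trunc N (fps_const c) = c%:P.
Proof. by apply/polyP => k; rewrite coefC coef_poly; case: k => [|k] //=; case: ifP. Qed.

Lemma trunc_mul N f g : eqm N (trunc N (fps_mul f g)) (trunc N f * trunc N g).
Proof.
apply/eqmP => k kN; rewrite coef_trunc // coefM; apply: eq_bigr => i _.
have ilt := ltn_ord i; rewrite !coef_trunc //=; lia.
Qed.

Lemma trunc_pow N f m : eqm N (trunc N (fps_pow f m)) (trunc N f ^+ m).
Proof.
elim: m => [|m ih] /=; first by rewrite trunc_const expr0.
by rewrite exprS; apply: (eqm_trans (trunc_mul _ _ _)); apply: eqmM.
Qed.

Lemma fps_pow_eq0 f m n : f 0%N = 0 -> (n < m)%N -> fps_pow f m n = 0.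
Proof.
move=> f0; elim: m n => [|m ih] n //= nm.
rewrite /fps_mul big1 // => -[[|i] /= ilt] _; first by rewrite f0 mul0r.
by rewrite ih ?mulr0 //; lia.
Qed.

Lemma coef_exprn_eq0 A m n : A`_0 = 0 -> (n < m)%N -> (A ^+ m)`_n = 0.
Proof.
move=> A0 nm; have A_trunc : eqm n A (trunc n (fun k => A`_k)).
  by apply/eqmP => k kn; rewrite coef_trunc.
rewrite (eqm_coef (eqmX m A_trunc) (leqnn n)) -(eqm_coef (trunc_pow _ _ _) (leqnn n)).
by rewrite coef_trunc // fps_pow_eq0.
Qed.

Lemma trunc_psum N c y : y 0%N = 0 ->
  eqm N (trunc N (fps_psum c y)) (\sum_(k < N.+1) (c k)%:P * trunc N y ^+ k).
Proof.
move=> y0; apply/eqmP => n nN; rewrite coef_trunc // coef_sum /fps_psum.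
under [RHS]eq_bigr => k _.
  rewrite mul_polyC coefZ -(eqm_coef (trunc_pow _ _ _) nN) coef_trunc //.
  over.
rewrite (big_ord_widen N.+1 (fun k => c k * fps_pow y k n)) // big_mkcond /=.
apply: eq_bigr => k _; case: ltnP => // nk.
by rewrite fps_pow_eq0 ?mulr0.
Qed.

Lemma trunc_shift N f : f 0%N = 0 -> trunc N.+1 f = 'X * trunc N (fps_shift f).
Proof. by move=> f0; apply/polyP => -[|k]; rewrite coefXM !coef_poly. Qed.

(* 1/g is g0^-1 * sum_k h^k with h = 1 - g/g0; the product telescopes to 1 - h^(N+1),
   and h^(N+1) vanishes to order N+1 since h 0 = 0. *)
Lemma trunc_inv N g : g 0%N != 0 -> eqm N (trunc N (fps_inv g) * trunc N g) 1.
Proof.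
move=> g0n; set g0 := g 0%N.
set h := fps_add (fps_const 1) (fps_opp (fps_scale g0^-1 g)).
have h0 : h 0%N = 0 by rewrite /h /fps_add /fps_opp /fps_scale /= mulVf // subrr.
set H := trunc N h.
have g_H : trunc N g = g0%:P * (1 - H).
  rewrite /H /h trunc_add trunc_const trunc_opp trunc_scale polyC1 opprD opprK addrA.
  by rewrite subrr add0r mulrA -polyCM mulfV // polyC1 mul1r.
have inv_H : eqm N (trunc N (fps_inv g)) (g0^-1%:P * \sum_(k < N.+1) H ^+ k).
  rewrite /fps_inv trunc_scale; apply: eqmM => //.
  apply: eqm_trans (trunc_psum _ _ h0) _.
  by under eq_bigr do rewrite polyC1 mul1r.
apply: eqm_trans (eqmM inv_H (erefl _)) _.
have -> : g0^-1%:P * (\sum_(k < N.+1) H ^+ k) * trunc N g = 1 - H ^+ N.+1.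
  have geom : 1 - H ^+ N.+1 = (1 - H) * \sum_(k < N.+1) H ^+ k.
    by rewrite -opprB subrX1 -mulNr opprB.
  rewrite g_H geom; transitivity ((g0^-1 * g0)%:P * ((1 - H) * \sum_(k < N.+1) H ^+ k)).
    by rewrite polyCM; ring.
  by rewrite mulVf // polyC1 mul1r.
apply/eqmP => k kN; rewrite coefB coef_exprn_eq0 ?subr0 //.
by rewrite coef_trunc.
Qed.

Lemma trunc_div N f g B : g 0%N = 0 -> g 1%N != 0 ->
  eqm N.+1 (trunc N.+1 f) (B * trunc N.+1 g) -> eqm N (trunc N (fps_div f g)) B.
Proof.
move=> g0 g1 fBg; set G := trunc N (fps_shift g).
have fBG : eqm N (trunc N (fps_shift f)) (B * G).
  apply/eqmP => k kN; rewrite coef_trunc //.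
  have := eqm_coef fBg (kN : k.+1 <= N.+1)%N.
  by rewrite coef_trunc // trunc_shift // mulrCA coefXM.
apply: (eqm_trans (trunc_mul _ _ _)).
apply: eqm_trans (eqmM fBG (erefl _)) _.
rewrite -mulrA -[X in eqm _ _ X]mulr1; apply: eqmM => //.
by rewrite mulrC; apply: trunc_inv.
Qed.

End Truncation.

Section Exponential.
Variable R : realType.

Lemma natr_fact_neq0 k : (k`!)%:R != 0 :> R.
Proof. by rewrite pnatr_eq0 -lt0n fact_gt0. Qed.

Lemma trunc_expD N (a b : R) :
  eqm N (trunc N (fps_exp a) * trunc N (fps_exp b)) (trunc N (fps_exp (a + b))).
Proof.
apply/eqmP => k kN; rewrite coefM coef_trunc // /fps_exp addrC exprDn mulr_suml.
apply: eq_bigr => -[i /=]; rewrite ltnS => ik _.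
rewrite !coef_trunc; try lia.
have binE : 'C(k, i)%:R = (k`!)%:R / ((i`!)%:R * ((k - i)`!)%:R) :> R.
  by rewrite -(bin_fact ik) !natrM; field; rewrite !natr_fact_neq0.
by rewrite -[X in _ = X / _]mulr_natr binE; field; rewrite !natr_fact_neq0.
Qed.

Lemma trunc_exp0 N : trunc N (fps_exp (0 : R)) = 1.
Proof.
apply/polyP => -[|k]; rewrite coef_poly coefC /fps_exp ?expr0 ?fact0 ?divr1 //=.
by rewrite expr0n mul0r; case: ifP.
Qed.

Lemma trunc_expX N (a : R) i :
  eqm N (trunc N (fps_exp a) ^+ i) (trunc N (fps_exp (i%:R * a))).
Proof.
elim: i => [|i ih]; first by rewrite expr0 mul0r trunc_exp0.
rewrite exprS; apply: eqm_trans (eqmM (erefl _) ih) _.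
by rewrite mulrS mulrDl mul1r; apply: trunc_expD.
Qed.

End Exponential.

Section DifferentialEvaluation.
Variable R : realType.
Implicit Types (P A B : {poly R}).

(* For size P <= n.+1, [evalD n P A] is (P(d/dt) A)(0). *)
Definition evalD n P A := \sum_(j < n.+1) P`_j * ((j`!)%:R * A`_j).

Lemma evalD_eqm n P A B : eqm n A B -> evalD n P A = evalD n P B.
Proof. by move=> AB; apply: eq_bigr => -[j /= jn] _; rewrite (eqm_coef AB). Qed.

Lemma evalD_sum n P (I : Type) (s : seq I) (F : I -> {poly R}) :
  evalD n P (\sum_(i <- s) F i) = \sum_(i <- s) evalD n P (F i).
Proof.
rewrite /evalD exchange_big /=; apply: eq_bigr => j _.
by rewrite coef_sum !mulr_sumr.
Qed.

Lemma evalD_scale n P c A : evalD n P (c%:P * A) = c * evalD n P A.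
Proof.
by rewrite /evalD mulr_sumr; apply: eq_bigr => j _; rewrite mul_polyC coefZ; ring.
Qed.

Lemma evalD_exp n N P a : (size P <= n.+1)%N -> (n <= N)%N ->
  evalD n P (trunc N (fps_exp a)) = P.[a].
Proof.
move=> sP nN; rewrite (horner_coef_wide _ sP); apply: eq_bigr => -[j /= jn] _.
rewrite coef_trunc; last exact: leq_trans nN.
by rewrite /fps_exp [_%:R * _]mulrC mulfVK // natr_fact_neq0.
Qed.

End DifferentialEvaluation.

Section QBernoulli.
Variables (R : realType) (q r : R).
Hypothesis q_neq0 : q != 0.

(* Since q/(1 - e^{qt}) = 1/y with y = (1 - e^{qt})/q, the defining series
   collapses to e^{rt} * sum_m y^m/(m+1). *)
Lemma trunc_qBernoulli_gf N :
  eqm N (trunc N (qBernoulli_gf q r))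
    (trunc N.+1 (fps_exp r) * \sum_(m < N.+1) (m.+1%:R^-1)%:P *
        (q^-1%:P * (1 - trunc N.+1 (fps_exp q))) ^+ m).
Proof.
rewrite /qBernoulli_gf.
set E := fps_add _ _; set y := fps_scale _ E; set c := fun k => _.
have E0 : E 0%N = 0 by rewrite /E /fps_add /fps_opp /fps_exp /= expr0 divr1 subrr.
have E1 : E 1%N != 0.
  by rewrite /E /fps_add /fps_opp /fps_exp /= expr1 divr1 add0r oppr_eq0.
have y0 : y 0%N = 0 by rewrite /y /fps_scale E0 mulr0.
set T := trunc N.+1 (fps_exp r); set Y := trunc N.+1 y.
have -> : q^-1%:P * (1 - trunc N.+1 (fps_exp q)) = Y.
  by rewrite /Y /y trunc_scale /E trunc_add trunc_opp trunc_const polyC1.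
set Sum := \sum_(m < N.+1) _.
have E_Y : trunc N.+1 E = q%:P * Y.
  by rewrite /Y /y trunc_scale mulrA -polyCM mulfV // polyC1 mul1r.
have S_Y : eqm N.+1 (trunc N.+1 (fps_psum c y)) (Y * Sum).
  apply: eqm_trans (trunc_psum _ _ y0) _.
  rewrite big_ord_recl /c polyC0 mul0r add0r /Sum mulr_sumr.
  by congr take_poly; apply: eq_bigr => i _; rewrite lift0 -/Y exprS; ring.
apply: trunc_div => //; rewrite trunc_scale E_Y.
apply: eqm_trans (eqmM (erefl _) (trunc_mul _ _ _)) _.
apply: eqm_trans (eqmM (erefl _) (eqmM (erefl _) S_Y)) _.
by congr take_poly; rewrite -/T; ring.
Qed.

Lemma trunc_exp_binomial N m :
  eqm N (trunc N (fps_exp r) * (q^-1%:P * (1 - trunc N (fps_exp q))) ^+ m)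
    (\sum_(i < m.+1) (q^-1 ^+ m * (-1) ^+ i * 'C(m, i)%:R)%:P
        * trunc N (fps_exp (r + i%:R * q))).
Proof.
set Eq := trunc N (fps_exp q); set T := trunc N (fps_exp r).
have -> : T * (q^-1%:P * (1 - Eq)) ^+ m =
    \sum_(i < m.+1) (q^-1 ^+ m * (-1) ^+ i * 'C(m, i)%:R)%:P * (T * Eq ^+ i).
  rewrite exprMn exprBn mulrA mulr_sumr; apply: eq_bigr => i _.
  by rewrite expr1n mulr1 -mulr_natr !rmorphM /= !rmorphXn rmorphN1 rmorph_nat; ring.
apply: eqm_sum => i.
apply: eqm_trans (eqmM (erefl _) (eqmM (erefl _) (trunc_expX _ _ _))) _.
by apply: eqmM => //; apply: trunc_expD.
Qed.

Lemma sum_coef_qBernoulli n (P : {poly R}) : (size P <= n.+1)%N ->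
  \sum_(j < n.+1) P`_j * qBernoulli q r j =
  \sum_(m < n.+1) m.+1%:R^-1 *
    \sum_(i < m.+1) q^-1 ^+ m * (-1) ^+ i * 'C(m, i)%:R * P.[r + i%:R * q].
Proof.
move=> sP; have -> : \sum_(j < n.+1) P`_j * qBernoulli q r j
    = evalD n P (trunc n (qBernoulli_gf q r)).
  by apply: eq_bigr => -[j /= jn] _; rewrite coef_trunc.
rewrite (evalD_eqm _ (trunc_qBernoulli_gf n)) mulr_sumr evalD_sum.
apply: eq_bigr => m _; rewrite mulrCA evalD_scale; congr (_ * _).
rewrite (evalD_eqm _ (eqm_le (leqnSn n) (trunc_exp_binomial n.+1 m))) evalD_sum.
by apply: eq_bigr => i _; rewrite evalD_scale evalD_exp.
Qed.

End QBernoulli.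

Section WhitneyPolynomial.
Variable R : realType.

Definition whitney_poly (q r : R) n :=
  (q ^+ n *: falling_poly R n) \Po (q^-1 *: ('X - r%:P)).

Lemma coef_whitney_poly q r n k : (whitney_poly q r n)`_k = rWhitney1 q r n k.
Proof. by []. Qed.

Lemma size_whitney_poly q r n : (size (whitney_poly q r n) <= n.+1)%N.
Proof.
have size_ff : (size (q ^+ n *: falling_poly R n) <= n.+1)%N.
  apply: leq_trans (size_scale_leq _ _) _.
  by rewrite size_prod_XsubC [index_enum _]unlock -enumT size_enum_ord.
have size_lin : (size (q^-1 *: ('X - r%:P)) <= 2)%N.
  by apply: leq_trans (size_scale_leq _ _) _; rewrite size_XsubC.
apply: leq_trans (size_comp_poly_leq _ _) _; rewrite ltnS.
have ff_deg : ((size (q ^+ n *: falling_poly R n)).-1 <= n)%N by lia.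
have lin_deg : ((size (q^-1 *: ('X - r%:P))).-1 <= 1)%N by lia.
by apply: leq_trans (leq_mul ff_deg lin_deg) _; rewrite muln1.
Qed.

Lemma horner_falling_poly_nat n i : (falling_poly R n).[i%:R] = (i ^_ n)%:R.
Proof.
rewrite horner_prod; case: (ltnP i n) => [lt_in | le_ni].
  by rewrite ffact_small // (bigD1 (Ordinal lt_in)) //= hornerXsubC subrr mul0r.
rewrite ffact_prod natr_prod; apply: eq_bigr => k _.
by rewrite hornerXsubC natrB // ltnW // (leq_trans (ltn_ord k)).
Qed.

Lemma horner_whitney_poly (q r : R) n i : q != 0 ->
  (whitney_poly q r n).[r + i%:R * q] = q ^+ n * (i ^_ n)%:R.
Proof.
move=> q_neq0; rewrite horner_comp hornerZ !hornerE.
by rewrite addrC addKr mulrCA mulVf // mulr1 horner_falling_poly_nat.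
Qed.

End WhitneyPolynomial.

Theorem mainTheorem2 (R : realType) (q r : R) (hq : 0 < q) (hr : 0 <= r) (n : nat) :
  \sum_(j < n.+1) (-1) ^+ n * rWhitney1 q r n j * qBernoulli q r j
  = (n`!)%:R / (n.+1)%:R.
Proof.
have q_neq0 : q != 0 by rewrite gt_eqF.
under eq_bigr do rewrite -coef_whitney_poly -mulrA.
rewrite -mulr_sumr (sum_coef_qBernoulli r q_neq0 (size_whitney_poly q r n)).
under eq_bigr do under eq_bigr do rewrite horner_whitney_poly //.
have vanish m i : (i < n)%N ->
    q^-1 ^+ m * (-1) ^+ i * 'C(m, i)%:R * (q ^+ n * (i ^_ n)%:R) = 0.
  by move=> lt_in; rewrite ffact_small ?mulr0.
rewrite big_ord_recr big1 ?add0r => [|m _]; last first.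
  by rewrite big1 ?mulr0 // => i _; apply: vanish (leq_trans (ltn_ord i) (ltn_ord m)).
rewrite big_ord_recr big1 ?add0r => [|i _]; last exact: vanish (ltn_ord i).
rewrite /= ffactnn binn exprVn.
have sign : (-1) ^+ n * (-1) ^+ n = 1 :> R by rewrite -exprMn mulrNN mulr1 expr1n.
transitivity ((-1) ^+ n * (-1) ^+ n * (q ^+ n / q ^+ n) * ((n`!)%:R / (n.+1)%:R)).
  by ring.
by rewrite sign mulfV ?expf_neq0 // !mul1r.
Qed.
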